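(* Let $G$ be a group with finite presentation $\mathcal P=\langle t,\mathcal A:\mathcal R,\ t^{-1}at=\phi(a)\ (a\in\mathcal A)\rangle$ of bounded depth $B\ge0$, $X$ its Cayley 2-complex and $P:X\to\mathbb R$ the level map. If $\alpha$ is an edge path loop in $X$ with $P(\alpha)\subset(-\infty,L]$, then $\alpha$ is homotopically trivial by a homotopy $H$ with $P(H)\subset(-\infty,L+B]$.
   Context: $\mathcal A$ is finite, $\mathcal R\subset F(\mathcal A)$ finite, $\phi:F(\mathcal A)\to F(\mathcal A)$ a homomorphism. Let $N_0$ be the normal closure in $F(\mathcal A)$ of $\bigcup_{j\ge0}\phi^j(\mathcal R)$ and $N^\infty=\bigcup_{i\ge0}\phi^{-i}(N_0)$; $\mathcal P$ has bounded depth $B$ if $N^\infty=\bigcup_{i=0}^B\phi^{-i}(N_0)$. $X$ is the simply connected 2-complex with vertex set $G$, 1-skeleton the Cayley graph with respect to $\mathcal A\cup\{t\}$, and 2-cells for relators. $P$ sends a vertex to the exponent sum of $t$ in it, each $\mathcal R$-cell to the level of its vertices, each conjugation 2-cell (boundary $a t\phi(a)^{-1}t^{-1}$, $a$-edge at level $L'$) onto $[L',L'+1]$, and $t$-edges linearly. *)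

From mathcomp Require Import all_boot all_order all_algebra.
Set Implicit Arguments. Unset Strict Implicit. Unset Printing Implicit Defensive.
Import Order.TTheory GRing.Theory Num.Theory.
Local Open Scope ring_scope.

(* A letter is (x, b): b = true means x, b = false means x^-1. *)
Definition word (X : Type) := seq (X * bool).

Definition inv_letter (X : Type) (l : X * bool) : X * bool := (l.1, ~~ l.2).
Definition winv (X : Type) (w : word X) : word X := rev (map (@inv_letter X) w).

Definition reduce (X : eqType) (w : word X) : word X :=
  foldr (fun l acc => match acc with
                      | l' :: acc' => if l' == inv_letter l then acc' else l :: acc
                      | [::] => [:: l]
                      end) [::] w.

(* w lies in the normal closure in F(X) of the set S of words:
   w is freely equal to a product of conjugates u s^{+-1} u^-1, s in S *)
Definition in_nclosure (X : eqType) (S : word X -> Prop) (w : word X) : Prop :=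
  exists s : seq (word X * word X * bool),
    (forall e, e \in s -> S e.1.2) /\
    reduce w = reduce (flatten (map (fun e : word X * word X * bool =>
        e.1.1 ++ (if e.2 then e.1.2 else winv e.1.2) ++ winv e.1.1) s)).

(* a homomorphism F(A) -> F(A) is given by the images of the generators *)
Definition phiw (A : Type) (phi : A -> word A) (w : word A) : word A :=
  flatten (map (fun l : A * bool => if l.2 then phi l.1 else winv (phi l.1)) w).

Definition N0 (A : eqType) (R : seq (word A)) (phi : A -> word A) (w : word A) :=
  in_nclosure (fun r => exists j, exists2 r0, r0 \in R & r = iter j (phiw phi) r0) w.

Definition Ninf (A : eqType) (R : seq (word A)) (phi : A -> word A) (w : word A) :=
  exists i, N0 R phi (iter i (phiw phi) w).

Definition bounded_depth (A : eqType) (R : seq (word A)) (phi : A -> word A)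
    (B : nat) : Prop :=
  forall w, Ninf R phi w -> exists2 i, (i <= B)%N & N0 R phi (iter i (phiw phi) w).

(* generators of G : A + {t};  None is t *)
Definition tlet (b : bool) (A : Type) : option A * bool := (None, b).
Definition lift (A : Type) (w : word A) : word (option A) :=
  map (fun l : A * bool => (Some l.1, l.2)) w.

(* boundary words of the 2-cells of X (read from a base vertex):
   R-cells, and conjugation cells with boundary a t phi(a)^-1 t^-1 *)
Definition cells (A : finType) (R : seq (word A)) (phi : A -> word A)
    : seq (word (option A)) :=
  map (@lift A) R ++
  [seq [:: (Some a, true); tlet true A] ++ winv (lift (phi a)) ++ [:: tlet false A]
  | a <- enum A].

(* w (read from any vertex g) is a loop in X iff w = 1 in G *)
Definition is_loop (A : finType) (R : seq (word A)) (phi : A -> word A)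
    (w : word (option A)) : Prop :=
  in_nclosure (fun r => r \in cells R phi) w.

Definition tsum (A : Type) (w : word (option A)) : int :=
  \sum_(l <- w) (if l.1 is None then (if l.2 then 1 else -1) else 0%R).

(* all vertices of the edge path reading w from a vertex of level p
   have level P <= M *)
Definition levels_le (A : Type) (p : int) (w : word (option A)) (M : int) : Prop :=
  forall k, (k <= size w)%N -> p + tsum (take k w) <= M.

(* elementary homotopy move of an edge path inside P^{-1}(-oo, M]:
   insert a backtrack x x^-1, or the boundary of a 2-cell (any starting
   point, either orientation); both paths must lie in levels <= M
   (then so does the elementary homotopy, including the 2-cell) *)
Definition elem_move (A : finType) (R : seq (word A)) (phi : A -> word A)
    (M p : int) (w w' : word (option A)) : Prop :=
  levels_le p w M /\ levels_le p w' M /\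
  exists u v c, w = u ++ v /\ w' = u ++ c ++ v /\
    ((exists x, c = [:: x; inv_letter x]) \/
     (exists2 r, r \in cells R phi & exists k, c = rot k r \/ c = rot k (winv r))).

Inductive homotopic_within (A : finType) (R : seq (word A)) (phi : A -> word A)
    (M p : int) : word (option A) -> word (option A) -> Prop :=
| hw_refl w : homotopic_within R phi M p w w
| hw_fwd w1 w2 w3 : elem_move R phi M p w1 w2 ->
    homotopic_within R phi M p w2 w3 -> homotopic_within R phi M p w1 w3
| hw_bwd w1 w2 w3 : elem_move R phi M p w2 w1 ->
    homotopic_within R phi M p w2 w3 -> homotopic_within R phi M p w1 w3.

From mathcomp Require Import all_boot all_order all_algebra zify.
Set Implicit Arguments. Unset Strict Implicit. Unset Printing Implicit Defensive.
Import Order.TTheory GRing.Theory Num.Theory.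
Local Open Scope ring_scope.

(* Conjugation cells let an A-letter slide up across t: the path a t is
   homotopic to t phi(a) without leaving the levels it already visits.  Hence
   a path w read from level p, with all vertices at levels <= M, is homotopic
   below M to t^(M-p) u t^-(M-p-tsum w), where u = raise M p w replaces each
   letter a met at level q by phi^(M-q)(a).  If w is a loop, it is freely a
   product of conjugates of cell boundaries; raised above all of them,
   conjugation cells become trivial and R-cells become phi-images of
   relators, so u lies in N^oo.  Bounded depth gives i <= B with phi^i(u) in
   N_0, and phi^i(u) is the word obtained by raising w to level L + i instead.
   Finally every word of N_0 bounds at any level M: phi^j(r) at level M is
   pulled down across j bands of conjugation cells to the relator r at level
   M - j. *)

Lemma exists_ub_seq (T : eqType) (R : realDomainType) (f : T -> R) (s : seq T) :
  exists M, forall x, x \in s -> f x <= M.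
Proof.
elim: s => [|y s [M hM]]; first by exists 0.
exists (Num.max (f y) M) => x; rewrite inE le_max.
by case/orP=> [/eqP -> | /hM ->]; rewrite ?lexx ?orbT.
Qed.

Section Words.
Variable X : Type.
Implicit Types (l : X * bool) (u v w : word X).

Lemma inv_letterK : involutive (@inv_letter X).
Proof. by case=> x b; rewrite /inv_letter /= negbK. Qed.

Lemma winv_cons l w : winv (l :: w) = winv w ++ [:: inv_letter l].
Proof. by rewrite /winv /= rev_cons -cats1. Qed.

Lemma winv_cat u v : winv (u ++ v) = winv v ++ winv u.
Proof. by rewrite /winv map_cat rev_cat. Qed.

Lemma winvK : involutive (@winv X).
Proof.
move=> w; rewrite /winv map_rev revK -map_comp.
by rewrite (@eq_map _ _ _ id) ?map_id // => l /=; rewrite inv_letterK.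
Qed.

End Words.

Section FreeReduction.
Variable X : eqType.
Implicit Types (l : X * bool) (s u v w x : word X).

Definition push l s : word X :=
  match s with
  | l' :: s' => if l' == inv_letter l then s' else l :: s
  | [::] => [:: l]
  end.

Lemma reduce_cons l w : reduce (l :: w) = push l (reduce w).
Proof. by []. Qed.

Lemma reduce_cat u v : reduce (u ++ v) = foldr push (reduce v) u.
Proof. by rewrite /reduce foldr_cat. Qed.

Lemma reduce_catr u v1 v2 : reduce v1 = reduce v2 -> reduce (u ++ v1) = reduce (u ++ v2).
Proof. by rewrite !reduce_cat => ->. Qed.

Fixpoint reduced s : bool :=
  if s is x :: ((y :: _) as s') then (y != inv_letter x) && reduced s' else true.

Lemma push_reduced l s : reduced s -> reduced (push l s).
Proof.
case: s => [//|m s] /=; case: ifP => // /eqP e.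
  by case: s => [//|y s] /andP [].
by move=> h; rewrite /= h andbT; apply/eqP => E; move: e; rewrite E.
Qed.

Lemma reduced_reduce w : reduced (reduce w).
Proof. by elim: w => [//|l w IH]; rewrite reduce_cons push_reduced. Qed.

Lemma push_inv_letter l s : reduced s -> push l (push (inv_letter l) s) = s.
Proof.
case: s => [|m s] /=; first by rewrite eqxx.
rewrite inv_letterK; case: (eqVneq m l) => [->|_]; last by rewrite /= eqxx.
by case: s => [//|m' s] /= /andP [/negbTE ->].
Qed.

Lemma reduce_cancel l w : reduce (l :: inv_letter l :: w) = reduce w.
Proof. by rewrite !reduce_cons push_inv_letter // reduced_reduce. Qed.

Lemma reduce_cancel_winv x w : reduce (x ++ winv x ++ w) = reduce w.
Proof.
elim: x w => [//|l x IH] w.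
by rewrite winv_cons -catA cat_cons reduce_cons IH -reduce_cons reduce_cancel.
Qed.

Definition conj_word (e : word X * word X * bool) : word X :=
  e.1.1 ++ (if e.2 then e.1.2 else winv e.1.2) ++ winv e.1.1.

Lemma in_nclosure_reduce (S : word X -> Prop) v w :
  reduce v = reduce w -> in_nclosure S w -> in_nclosure S v.
Proof. by move=> Evw [s [hs E]]; exists s; rewrite Evw. Qed.

Lemma in_nclosure_conj_cat (S : word X -> Prop) e w :
  S e.1.2 -> in_nclosure S w -> in_nclosure S (conj_word e ++ w).
Proof.
move=> he [s [hs E]]; exists (e :: s); split; last exact: reduce_catr.
by move=> e'; rewrite inE => /orP [/eqP -> | /hs].
Qed.

Lemma reduce_conj_word_cancel u x b w :
  reduce (conj_word (u, x ++ winv x, b) ++ w) = reduce w.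
Proof.
have -> : conj_word (u, x ++ winv x, b) = u ++ x ++ winv x ++ winv u.
  by rewrite /conj_word /=; case: b; rewrite ?winv_cat ?winvK -!catA.
by rewrite -!catA reduce_cat reduce_cancel_winv -reduce_cat reduce_cancel_winv.
Qed.

End FreeReduction.

Section Endomorphism.
Variables (A : Type) (phi : A -> word A).
Local Notation phin k := (iter k (phiw phi)).

Lemma phiw_cat u v : phiw phi (u ++ v) = phiw phi u ++ phiw phi v.
Proof. by rewrite /phiw map_cat flatten_cat. Qed.

Lemma phiw_winv w : phiw phi (winv w) = winv (phiw phi w).
Proof.
elim: w => [//|[a b] w IH].
rewrite winv_cons phiw_cat IH -cat1s phiw_cat winv_cat; congr (_ ++ _).
by rewrite /phiw /= !cats0; case: b => //=; rewrite winvK.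
Qed.

Lemma iter_phiw_nil k : phin k [::] = [::].
Proof. by elim: k => //= k ->. Qed.

Lemma iter_phiw_cat k u v : phin k (u ++ v) = phin k u ++ phin k v.
Proof. by elim: k => //= k ->; rewrite phiw_cat. Qed.

Lemma iter_phiw_winv k w : phin k (winv w) = winv (phin k w).
Proof. by elim: k => //= k ->; rewrite phiw_winv. Qed.

End Endomorphism.

Section Levels.
Variable A : Type.
Implicit Types (x : word A) (l : option A * bool) (u v w : word (option A)).

Lemma lift_cat x y : lift (x ++ y) = lift x ++ lift y.
Proof. by rewrite /lift map_cat. Qed.

Lemma lift_winv x : lift (winv x) = winv (lift x).
Proof. by rewrite /lift /winv map_rev -!map_comp; congr rev; apply: eq_map => -[]. Qed.

Definition tstep l : int := if l.1 is None then (if l.2 then 1 else -1) else 0.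

Definition tpow (n : nat) : word (option A) := nseq n (tlet true A).
Definition tpowV (n : nat) : word (option A) := nseq n (tlet false A).

Lemma tsum_nil : tsum ([::] : word (option A)) = 0.
Proof. by rewrite /tsum big_nil. Qed.

Lemma tsum_cons l w : tsum (l :: w) = tstep l + tsum w.
Proof. by rewrite /tsum big_cons. Qed.

Lemma tsum_cat u v : tsum (u ++ v) = tsum u + tsum v.
Proof. by rewrite /tsum big_cat. Qed.

Lemma tstep_inv l : tstep (inv_letter l) = - tstep l.
Proof. by case: l => [[a|] [|]]; rewrite /tstep /= ?oppr0 ?opprK. Qed.

Lemma tsum_winv w : tsum (winv w) = - tsum w.
Proof.
elim: w => [|l w IH]; first by rewrite tsum_nil oppr0.
by rewrite winv_cons tsum_cat IH !tsum_cons tsum_nil tstep_inv addr0 opprD addrC.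
Qed.

Lemma tsum_lift x : tsum (lift x) = 0.
Proof. by elim: x => [|l x IH]; rewrite ?tsum_nil // /lift /= tsum_cons IH. Qed.

Lemma tsum_rot k w : tsum (rot k w) = tsum w.
Proof. by rewrite /rot tsum_cat addrC -tsum_cat cat_take_drop. Qed.

Lemma tsum_tpow n : tsum (tpow n) = n%:Z.
Proof. by elim: n => [|n IH]; rewrite ?tsum_nil //= tsum_cons IH /tstep /=; lia. Qed.

Lemma tsum_tpowV n : tsum (tpowV n) = - n%:Z.
Proof. by elim: n => [|n IH]; rewrite ?tsum_nil //= tsum_cons IH /tstep /=; lia. Qed.

Lemma winv_tpow n : winv (tpow n) = tpowV n.
Proof. by rewrite /winv map_nseq rev_nseq. Qed.

Lemma winv_tpowV n : winv (tpowV n) = tpow n.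
Proof. by rewrite -winv_tpow winvK. Qed.

Lemma levels_start p N w : levels_le p w N -> p <= N.
Proof. by move/(_ 0%N isT); rewrite take0 tsum_nil addr0. Qed.

Lemma levels_nilI p N : p <= N -> levels_le p ([::] : word (option A)) N.
Proof. by move=> h [|k] //= _; rewrite tsum_nil addr0. Qed.

Lemma levels_consE p N l w :
  levels_le p (l :: w) N -> p <= N /\ levels_le (p + tstep l) w N.
Proof.
move=> h; split; first exact: levels_start h.
by move=> k hk; have := h k.+1 hk; rewrite /= tsum_cons addrA.
Qed.

Lemma levels_consI p N l w :
  p <= N -> levels_le (p + tstep l) w N -> levels_le p (l :: w) N.
Proof.
move=> h1 h2 [|k] /= hk; first by rewrite tsum_nil addr0.
by rewrite tsum_cons addrA; apply: h2.
Qed.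

Lemma levels_catE p N u v :
  levels_le p (u ++ v) N -> levels_le p u N /\ levels_le (p + tsum u) v N.
Proof.
elim: u p => [|l u IH] p /=.
  by move=> h; split; [exact/levels_nilI/(levels_start h) | rewrite tsum_nil addr0].
move/levels_consE=> [h1 /IH [h2 h3]]; split; first exact: levels_consI.
by rewrite tsum_cons addrA.
Qed.

Lemma levels_catI p N u v :
  levels_le p u N -> levels_le (p + tsum u) v N -> levels_le p (u ++ v) N.
Proof.
elim: u p => [|l u IH] p /=; first by rewrite tsum_nil addr0.
move/levels_consE=> [h1 h2] h3; apply: levels_consI => //; apply: IH => //.
by rewrite -addrA -tsum_cons.
Qed.

Lemma levels_end p N w : levels_le p w N -> p + tsum w <= N.
Proof. by move/(_ (size w) (leqnn _)); rewrite take_size. Qed.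

Lemma levels_le_trans p w M N : levels_le p w M -> M <= N -> levels_le p w N.
Proof. by move=> h hMN k hk; apply: le_trans (h k hk) hMN. Qed.

Lemma levels_liftI p N x : p <= N -> levels_le p (lift x) N.
Proof.
move=> h; elim: x => [|l x IH]; first exact: levels_nilI.
by apply: levels_consI => //; rewrite /tstep /= addr0.
Qed.

Lemma levels_winv_liftI p N x : p <= N -> levels_le p (winv (lift x)) N.
Proof. by rewrite -lift_winv; apply: levels_liftI. Qed.

Lemma levels_tpowI p N n : p + n%:Z <= N -> levels_le p (tpow n) N.
Proof.
elim: n p => [|n IH] p h; first by apply: levels_nilI; lia.
by apply: levels_consI; [lia | apply: IH; rewrite /tstep /=; lia].
Qed.

Lemma levels_tpowVI p N n : p <= N -> levels_le p (tpowV n) N.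
Proof.
elim: n p => [|n IH] p h; first exact: levels_nilI.
by apply: levels_consI => //; apply: IH; rewrite /tstep /=; lia.
Qed.

End Levels.

Ltac tsum_simpl :=
  rewrite ?(tsum_cat, tsum_cons, tsum_nil, tsum_winv, tsum_lift, tsum_tpow, tsum_tpowV);
  try rewrite /tstep; rewrite /=.

Ltac solve_levels :=
  rewrite ?(winvK, winv_tpow, winv_tpowV);
  repeat match goal with |- levels_le _ _ _ =>
    first [ apply: levels_catI | apply: levels_consI | apply: levels_nilI
          | apply: levels_liftI | apply: levels_winv_liftI
          | apply: levels_tpowI | apply: levels_tpowVI ] end;
  tsum_simpl; lia.

Section Raise.
Variables (A : eqType) (phi : A -> word A).
Local Notation W := (word (option A)).
Local Notation phin k := (iter k (phiw phi)).
Implicit Types (u v w : W) (l : option A * bool) (p q M : int).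

Lemma tsum_push l w : tsum (push l w) = tstep l + tsum w.
Proof.
case: w => [|m w] /=; first by rewrite !tsum_cons tsum_nil.
case: eqP => [->|_]; last by rewrite tsum_cons.
by rewrite tsum_cons tstep_inv addrA subrr add0r.
Qed.

Lemma tsum_reduce w : tsum (reduce w) = tsum w.
Proof. by elim: w => [//|l w IH]; rewrite reduce_cons tsum_push IH tsum_cons. Qed.

Lemma tsum_conj_word (e : W * W * bool) : tsum e.1.2 = 0 -> tsum (conj_word e) = 0.
Proof. by move=> h; rewrite /conj_word; case: e.2; tsum_simpl; rewrite h; lia. Qed.

Definition conj_cell (a : A) : W :=
  [:: (Some a, true); tlet true A] ++ winv (lift (phi a)) ++ [:: tlet false A].

(* Only meaningful for p <= M: above level M the exponent |M - p| is junk. *)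
Definition raise_letter M p (l : option A * bool) : word A :=
  if l is (Some a, b) then phin (absz (M - p)%R) [:: (a, b)] else [::].

Fixpoint raise M p w : word A :=
  if w is l :: w' then raise_letter M p l ++ raise M (p + tstep l) w' else [::].

Lemma raise_cons M p l w :
  raise M p (l :: w) = raise_letter M p l ++ raise M (p + tstep l) w.
Proof. by []. Qed.

Lemma raise_cat M p u v : raise M p (u ++ v) = raise M p u ++ raise M (p + tsum u) v.
Proof.
elim: u p => [|l u IH] p; first by rewrite tsum_nil addr0.
by rewrite cat_cons !raise_cons IH tsum_cons addrA catA.
Qed.

Lemma raise_letter_inv M p l :
  raise_letter M (p + tstep l) (inv_letter l) = winv (raise_letter M p l).
Proof. by case: l => [[a|] b] //=; rewrite /tstep /= addr0 -iter_phiw_winv. Qed.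

Lemma raise_winv M p u : raise M (p + tsum u) (winv u) = winv (raise M p u).
Proof.
elim: u p => [//|l u IH] p.
rewrite winv_cons raise_cat tsum_cons addrA IH raise_cons winv_cat; congr (_ ++ _).
by rewrite tsum_winv addrK -[raise _ _ [::]]/[::] cats0 raise_letter_inv.
Qed.

Lemma raise_lift M p (r : word A) : raise M p (lift r) = phin (absz (M - p)%R) r.
Proof.
elim: r => [|[a b] r IH] /=; first by rewrite iter_phiw_nil.
by rewrite addr0 IH -iter_phiw_cat.
Qed.

Lemma raise_shift L (i : nat) p w : levels_le p w L ->
  raise (L + i%:Z) p w = phin i (raise L p w).
Proof.
elim: w p => [|l w IH] p hl; first by rewrite /= iter_phiw_nil.
have [hp hw] := levels_consE hl.
rewrite !raise_cons iter_phiw_cat IH //; congr (_ ++ _).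
case: l {hl hw} => [[a|] b] /=; last by rewrite iter_phiw_nil.
by rewrite -iterD; congr iter; lia.
Qed.

Lemma raise_cancel M p l w :
  reduce (raise M p (l :: inv_letter l :: w)) = reduce (raise M p w).
Proof.
by rewrite !raise_cons raise_letter_inv tstep_inv addrK reduce_cancel_winv.
Qed.

Lemma raise_reduce M p w1 w2 : reduce w1 = reduce w2 ->
  reduce (raise M p w1) = reduce (raise M p w2).
Proof.
suff raise_reduceE w q : reduce (raise M q w) = reduce (raise M q (reduce w)).
  by move=> E; rewrite raise_reduceE E -raise_reduceE.
elim: w q => [//|l w IH] q.
rewrite raise_cons reduce_cat IH -reduce_cat -raise_cons reduce_cons.
case: (reduce w) => [//|m r] /=.
by case: eqP => [->|//]; rewrite raise_cancel.
Qed.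

Lemma raise_conj_word M p (e : W * W * bool) : tsum e.1.2 = 0 ->
  raise M p (conj_word e) =
  conj_word (raise M p e.1.1, raise M (p + tsum e.1.1) e.1.2, e.2).
Proof.
move=> h.
have ht : tsum (if e.2 then e.1.2 else winv e.1.2) = 0.
  by case: e.2; rewrite ?tsum_winv h ?oppr0.
rewrite /conj_word !raise_cat ht addr0 raise_winv /=; congr (_ ++ _).
congr (_ ++ _); case: e.2 => //.
by have := raise_winv M (p + tsum e.1.1) e.1.2; rewrite h addr0.
Qed.

Lemma raise_conj_cell M q a : q + 1 <= M ->
  raise M q (conj_cell a) = phin (absz (M - q)%R) [:: (a, true)] ++
                            winv (phin (absz (M - q)%R) [:: (a, true)]).
Proof.
move=> hq.
have Eraise : raise M (q + 1) (winv (lift (phi a))) =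
              winv (phin (absz (M - q)%R) [:: (a, true)]).
  have := raise_winv M (q + 1) (lift (phi a)); rewrite tsum_lift addr0 => ->.
  have -> : absz (M - q)%R = (absz (M - (q + 1))%R).+1 by lia.
  by rewrite raise_lift iterSr /phiw /= cats0.
rewrite /conj_cell !raise_cat (_ : q + tsum _ = q + 1); last by tsum_simpl; lia.
by rewrite Eraise /= !cats0.
Qed.

End Raise.

Section Homotopy.
Variables (A : finType) (R : seq (word A)) (phi : A -> word A).
Local Notation hw := (homotopic_within R phi).
Local Notation W := (word (option A)).
Local Notation phin k := (iter k (phiw phi)).
Local Notation t := (tlet true A).
Local Notation tV := (tlet false A).
Local Notation tpow := (@tpow A).
Local Notation tpowV := (@tpowV A).
Local Notation raise := (raise phi).
Local Notation conj_cell := (conj_cell phi).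
Implicit Types (u v w x y z c : W) (p q M N : int).

Lemma hw_trans N p x y z : hw N p x y -> hw N p y z -> hw N p x z.
Proof.
elim=> [//|w1 w2 w3 e _ IH|w1 w2 w3 e _ IH] h.
  exact: hw_fwd e (IH h).
exact: hw_bwd e (IH h).
Qed.

Lemma hw_sym N p x y : hw N p x y -> hw N p y x.
Proof.
elim=> [w|w1 w2 w3 e _ IH|w1 w2 w3 e _ IH]; first exact: hw_refl.
  by apply: hw_trans IH _; apply: hw_bwd e (hw_refl _ _ _ _ _).
by apply: hw_trans IH _; apply: hw_fwd e (hw_refl _ _ _ _ _).
Qed.

Lemma tsum_cell r : r \in cells R phi -> tsum r = 0.
Proof.
rewrite mem_cat => /orP [/mapP [r0 _ ->]|/mapP [a _ ->]]; first exact: tsum_lift.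
by tsum_simpl; lia.
Qed.

Definition elementary_loop c : Prop :=
  (exists l, c = [:: l; inv_letter l]) \/
  (exists2 r, r \in cells R phi & exists k, c = rot k r \/ c = rot k (winv r)).

Lemma tsum_elementary_loop c : elementary_loop c -> tsum c = 0.
Proof.
case=> [[l ->]|[r /tsum_cell h [k [->|->]]]]; rewrite ?tsum_rot.
- by rewrite !tsum_cons tsum_nil tstep_inv; lia.
- exact: h.
- by rewrite tsum_winv h oppr0.
Qed.

Lemma elem_move_tsum N p w w' : elem_move R phi N p w w' -> tsum w' = tsum w.
Proof.
by move=> [_ [_ [u [v [c [-> [-> /tsum_elementary_loop h]]]]]]]; rewrite !tsum_cat h add0r.
Qed.

Lemma elem_move_ctx N p u v w1 w2 :
  elem_move R phi N (p + tsum u) w1 w2 ->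
  levels_le p u N -> levels_le (p + tsum u + tsum w1) v N ->
  elem_move R phi N p (u ++ w1 ++ v) (u ++ w2 ++ v).
Proof.
move=> e hu hv; have et := elem_move_tsum e.
case: e => [l1 [l2 [u0 [v0 [c [E1 [E2 hc]]]]]]].
split; first by apply: levels_catI => //; apply: levels_catI.
split; first by apply: levels_catI => //; apply: levels_catI; rewrite ?et.
by exists (u ++ u0), (v0 ++ v), c; rewrite E1 E2 !catA.
Qed.

Lemma hw_ctx N p q u v x y : hw N q x y -> q = p + tsum u ->
  levels_le p u N -> levels_le (p + tsum u + tsum x) v N ->
  hw N p (u ++ x ++ v) (u ++ y ++ v).
Proof.
move=> h E hu; rewrite {}E in h; elim: h => [w|w1 w2 w3 e _ IH|w1 w2 w3 e _ IH] hv.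
- exact: hw_refl.
- by apply: hw_fwd (elem_move_ctx e hu hv) _; apply: IH; rewrite (elem_move_tsum e).
- have hv' : levels_le (p + tsum u + tsum w2) v N by rewrite -(elem_move_tsum e).
  exact: hw_bwd (elem_move_ctx e hu hv') (IH hv').
Qed.

Lemma hw_prefix N p q u x y : hw N q x y -> q = p + tsum u ->
  levels_le p u N -> p + tsum u + tsum x <= N -> hw N p (u ++ x) (u ++ y).
Proof.
move=> h E hu hx; have := hw_ctx (v := [::]) h E hu (levels_nilI hx).
by rewrite !cats0.
Qed.

Lemma hw_suffix N p x y v : hw N p x y ->
  p <= N -> levels_le (p + tsum x) v N -> hw N p (x ++ v) (y ++ v).
Proof.
move=> h hp hv; have := @hw_ctx N p p [::] v x y h.
by rewrite tsum_nil addr0; apply=> //; apply: levels_nilI.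
Qed.

Lemma hw_remove N p u c v : elementary_loop c ->
  levels_le p (u ++ c ++ v) N -> hw N p (u ++ c ++ v) (u ++ v).
Proof.
move=> hc h; apply: (hw_bwd _ (hw_refl _ _ _ _ _)); split.
  have [hu /levels_catE [_ hv]] := levels_catE h.
  by apply: levels_catI => //; rewrite (tsum_elementary_loop hc) addr0 in hv.
by split=> //; exists u, v, c.
Qed.

Lemma hw_cancel N p u l v : levels_le p (u ++ l :: inv_letter l :: v) N ->
  hw N p (u ++ l :: inv_letter l :: v) (u ++ v).
Proof. by apply: (@hw_remove N p u [:: l; inv_letter l] v); left; exists l. Qed.

Lemma hw_cancel_winv N p u x v : levels_le p (u ++ x ++ winv x ++ v) N ->
  hw N p (u ++ x ++ winv x ++ v) (u ++ v).
Proof.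
elim: x u v => [|l x IH] u v /=; first by move=> _; apply: hw_refl.
have -> : u ++ l :: x ++ winv (l :: x) ++ v
        = (u ++ [:: l]) ++ x ++ winv x ++ inv_letter l :: v.
  by rewrite winv_cons -!catA.
move=> h; apply: hw_trans (IH _ _ h) _.
have [hul /levels_catE [_ /levels_catE [_ hv]]] := levels_catE h.
rewrite tsum_winv addrK in hv.
have := @hw_cancel N p u l v; rewrite -[l :: _]cat1s catA; apply.
exact: levels_catI hul hv.
Qed.

Lemma hw_cancel_winv0 N p x : levels_le p (x ++ winv x) N -> hw N p (x ++ winv x) [::].
Proof.
by move=> h; have := @hw_cancel_winv N p [::] x [::]; rewrite /= cats0; apply.
Qed.

Lemma conj_cell_in_cells a : conj_cell a \in cells R phi.
Proof. by rewrite mem_cat; apply/orP; right; apply/mapP; exists a; rewrite ?mem_enum. Qed.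

Lemma hw_slide_letter N q a b d :
  elementary_loop ([:: (Some a, b); t] ++ winv (lift d) ++ [:: tV]) -> q + 1 <= N ->
  hw N q [:: (Some a, b); t] (t :: lift d).
Proof.
move=> hc hq; apply: hw_sym.
(* t d  ~  (a t d^-1 t^-1) t d  ~  a t d^-1 d  ~  a t *)
apply: hw_trans (_ : hw N q (([:: (Some a, b); t] ++ winv (lift d) ++ [:: tV]) ++ t :: lift d) _).
  by apply: hw_sym; apply: (@hw_remove N q [::] _ (t :: lift d) hc); solve_levels.
have -> : ([:: (Some a, b); t] ++ winv (lift d) ++ [:: tV]) ++ t :: lift d
        = ([:: (Some a, b); t] ++ winv (lift d)) ++ tV :: inv_letter tV :: lift d.
  by rewrite -!catA.
apply: hw_trans (hw_cancel _) _; first by solve_levels.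
have -> : ([:: (Some a, b); t] ++ winv (lift d)) ++ lift d
        = [:: (Some a, b); t] ++ winv (lift d) ++ winv (winv (lift d)) ++ [::].
  by rewrite winvK cats0 catA.
apply: hw_trans (hw_cancel_winv _) _; first by solve_levels.
by rewrite cats0; apply: hw_refl.
Qed.

Lemma hw_push_letter N q a b : q + 1 <= N ->
  hw N q [:: (Some a, b); t] (t :: lift (phiw phi [:: (a, b)])).
Proof.
(* For a^-1 the conjugation cell is read backwards, starting from a^-1. *)
rewrite /phiw /= cats0; case: b; apply: hw_slide_letter; right;
  exists (conj_cell a); rewrite ?conj_cell_in_cells //.
  by exists 0%N; left; rewrite rot0.
exists (size (lift (phi a))).+2; right.
have -> : winv (conj_cell a) = ([:: t] ++ lift (phi a) ++ [:: tV]) ++ [:: (Some a, false)].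
  by rewrite /conj_cell !winv_cat winvK -!catA.
have -> : (size (lift (phi a))).+2 = size ([:: t] ++ lift (phi a) ++ [:: tV]).
  by rewrite !size_cat addn1.
by rewrite rot_size_cat lift_winv winvK.
Qed.

Lemma hw_push_word N q (x : word A) : q + 1 <= N ->
  hw N q (lift x ++ [:: t]) (t :: lift (phiw phi x)).
Proof.
move=> hq; elim: x => [|[a b] x IH]; first exact: hw_refl.
rewrite -[lift _ ++ _]/([:: (Some a, b)] ++ (lift x ++ [:: t])).
apply: hw_trans (hw_prefix IH _ _ _) _; try solve_levels.
rewrite -[_ ++ t :: _]/([:: (Some a, b); t] ++ lift (phiw phi x)).
apply: hw_trans (hw_suffix (hw_push_letter _ _ hq) _ _) _; try solve_levels.
by rewrite -[(a, b) :: x]cat1s phiw_cat lift_cat; apply: hw_refl.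
Qed.

Lemma hw_push_word_iter N q (x : word A) k : q + k%:Z <= N ->
  hw N q (lift x ++ tpow k) (tpow k ++ lift (phin k x)).
Proof.
elim: k x q => [|k IH] x q hq; first by rewrite cats0; apply: hw_refl.
rewrite -[tpow k.+1]/([:: t] ++ tpow k) catA.
apply: hw_trans (hw_suffix (hw_push_word _ _) _ _) _; try solve_levels.
rewrite -[(t :: _) ++ _]/([:: t] ++ (lift (phiw phi x) ++ tpow k)).
apply: hw_trans (hw_prefix (IH _ (q + 1) _) _ _ _) _; try solve_levels.
by rewrite iterSr; apply: hw_refl.
Qed.

Lemma hw_raise N M p w : M <= N -> levels_le p w M ->
  hw N p w (tpow (absz (M - p)%R) ++ lift (raise M p w) ++ tpowV (absz (M - (p + tsum w))%R)).
Proof.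
move=> hMN; elim: w p => [|[[a|] b] w IH] p hl.
- rewrite /= tsum_nil addr0 -winv_tpow; apply/hw_sym/hw_cancel_winv0.
  by have hp := levels_start hl; solve_levels.
- have [hp hw'] := levels_consE hl; rewrite /tstep /= addr0 in hw'.
  have he := levels_end hw'.
  rewrite -cat1s; apply: hw_trans (hw_prefix (IH _ hw') _ _ _) _; try solve_levels.
  rewrite catA; apply: hw_trans (hw_suffix (hw_push_word_iter [:: (a, b)] _) _ _) _;
    try solve_levels.
  by rewrite /= tsum_cons /tstep /= add0r addr0 lift_cat -!catA; apply: hw_refl.
- case: b hl => hl; have [hp hw'] := levels_consE hl; have he := levels_end hw';
    have hp' := levels_start hw'; rewrite /tstep /= in hw' he hp';
    rewrite -cat1s; apply: hw_trans (hw_prefix (IH _ hw') _ _ _) _; try solve_levels;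
    rewrite /= tsum_cons /tstep /= addrA.
  + have -> : absz (M - p)%R = (absz (M - (p + 1))%R).+1 by lia.
    exact: hw_refl.
  + have -> : absz (M - (p - 1))%R = (absz (M - p)%R).+1 by lia.
    by apply: (@hw_cancel N p [::] tV); solve_levels.
Qed.

Lemma hw_relator N q (r : word A) (e : bool) : q <= N -> r \in R ->
  hw N q (lift (if e then r else winv r)) [::].
Proof.
move=> hq hr; have := @hw_remove N q [::] (lift (if e then r else winv r)) [::].
rewrite /= cats0; apply; last by solve_levels.
right; exists (lift r); first by rewrite mem_cat map_f.
by exists 0%N; rewrite !rot0 -lift_winv; case: e; [left | right].
Qed.

Lemma hw_pull_down N M (j : nat) (x : word A) : M <= N ->
  (forall q, q <= N -> hw N q (lift x) [::]) -> hw N M (lift (phin j x)) [::].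
Proof.
move=> hM hx.
apply: hw_trans (_ : hw N M (tpowV j ++ tpow j ++ lift (phin j x)) _).
  apply: hw_sym; have := @hw_cancel_winv N M [::] (tpowV j) (lift (phin j x)).
  by rewrite /= winv_tpowV; apply; solve_levels.
apply: hw_trans (hw_prefix (hw_sym (@hw_push_word_iter N (M - j%:Z) x j _)) _ _ _) _;
  try solve_levels.
apply: hw_trans (hw_ctx (hx (M - j%:Z) _) _ _ _) _; try solve_levels.
by have := @hw_cancel_winv0 N M (tpowV j); rewrite winv_tpowV; apply; solve_levels.
Qed.

Lemma hw_lift_reduce N M (x : word A) : M <= N -> hw N M (lift x) (lift (reduce x)).
Proof.
move=> hM; elim: x => [|l x IH]; first exact: hw_refl.
rewrite -[lift _]/([:: (Some l.1, l.2)] ++ lift x).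
apply: hw_trans (hw_prefix IH _ _ _) _; try solve_levels.
rewrite reduce_cons; case: (reduce x) => [|m r]; first exact: hw_refl.
rewrite /=; case: eqP => [->|_]; last exact: hw_refl.
by apply: (@hw_cancel N M [::]); solve_levels.
Qed.

Lemma hw_conj_word N M (e : word A * word A * bool) : M <= N ->
  (forall q, q <= N -> hw N q (lift (if e.2 then e.1.2 else winv e.1.2)) [::]) ->
  hw N M (lift (conj_word e)) [::].
Proof.
move=> hM he; rewrite /conj_word !lift_cat lift_winv.
apply: hw_trans (hw_ctx (he M hM) _ _ _) _; try solve_levels.
by apply: hw_cancel_winv0; solve_levels.
Qed.

Lemma hw_N0 N M (v : word A) : M <= N -> N0 R phi v -> hw N M (lift v) [::].
Proof.
move=> hM [s [hs E]].
apply: hw_trans (hw_lift_reduce v hM) _; rewrite E.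
apply: hw_trans (hw_sym (hw_lift_reduce _ hM)) _.
elim: s hs {E} => [|e s IH] hs; first exact: hw_refl.
change (hw N M (lift (conj_word e ++ flatten (map (@conj_word _) s))) [::]).
rewrite lift_cat; apply: hw_trans (hw_prefix (IH _) _ _ _) _; try solve_levels.
  by move=> e' he'; apply: hs; rewrite inE he' orbT.
rewrite cats0; apply: (hw_conj_word (e := e)) => // q hq.
have [j [r hr ->]] := hs e (mem_head _ _).
rewrite -[winv (phin j r)]iter_phiw_winv -fun_if.
by apply: hw_pull_down => // q' hq'; apply: hw_relator.
Qed.

Lemma is_loop_tsum w : is_loop R phi w -> tsum w = 0.
Proof.
case=> s [hs E]; rewrite -tsum_reduce E tsum_reduce.
elim: s hs {E} => [|e s IH] hs; first exact: tsum_nil.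
change (tsum (conj_word e ++ flatten (map (@conj_word _) s)) = 0).
rewrite tsum_cat tsum_conj_word ?IH ?add0r ?tsum_cell ?hs ?mem_head //.
by move=> e' he'; apply: hs; rewrite inE he' orbT.
Qed.

Lemma raise_nclosure M p (s : seq (W * W * bool)) :
  (forall e, e \in s -> e.1.2 \in cells R phi) ->
  (forall e, e \in s -> p + tsum e.1.1 + 1 <= M) ->
  N0 R phi (raise M p (flatten (map (@conj_word _) s))).
Proof.
elim: s => [|e s IH] hcell hlow; first by exists [::]; split=> // e; rewrite in_nil.
have sub e' : e' \in s -> e' \in e :: s by rewrite inE => ->; rewrite orbT.
have IHs := IH (fun e' he' => hcell e' (sub e' he')) (fun e' he' => hlow e' (sub e' he')).
have he := hcell e (mem_head _ _).
change (N0 R phi (raise M p (conj_word e ++ flatten (map (@conj_word _) s)))).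
rewrite raise_cat tsum_conj_word ?(tsum_cell he) // addr0 raise_conj_word ?(tsum_cell he) //.
move: he; rewrite mem_cat => /orP [/mapP [r hr ->] | /mapP [a _ ->]].
  by rewrite raise_lift; apply: in_nclosure_conj_cat IHs; exists (absz (M - (p + tsum e.1.1))%R), r.
rewrite raise_conj_cell ?hlow ?mem_head //.
exact: in_nclosure_reduce (reduce_conj_word_cancel _ _ _ _) IHs.
Qed.

Lemma is_loop_raise_Ninf L p w :
  is_loop R phi w -> levels_le p w L -> Ninf R phi (raise L p w).
Proof.
case=> s [hs E] hl.
have [M0 hM0] := exists_ub_seq (fun e : W * W * bool => p + tsum e.1.1 + 1) s.
exists (absz (M0 - L)%R); rewrite -raise_shift //.
apply: in_nclosure_reduce (raise_reduce phi _ _ E) _.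
by apply: raise_nclosure => // e he; apply: le_trans (hM0 e he) _; lia.
Qed.

End Homotopy.

Theorem lemma5p9 (A : finType) (R : seq (word A)) (phi : A -> word A) (B : nat) :
  bounded_depth R phi B ->
  forall (p L : int) (w : word (option A)),
    is_loop R phi w ->
    levels_le p w L ->
    homotopic_within R phi (L + B%:Z) p w [::].
Proof.
move=> bd p L w hloop hlev.
have hp := levels_start hlev.
have [i hiB hN0] := bd _ (is_loop_raise_Ninf hloop hlev).
rewrite -raise_shift // in hN0.
have hlev' : levels_le p w (L + i%:Z) by apply: levels_le_trans hlev _; lia.
apply: hw_trans (hw_raise R phi _ hlev') _; first by lia.
rewrite (is_loop_tsum hloop) addr0 -winv_tpow.
apply: hw_trans (hw_ctx (@hw_N0 _ _ _ _ (L + i%:Z) _ _ hN0) _ _ _) _; try solve_levels.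
by apply: hw_cancel_winv0; solve_levels.
Qed.
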